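(* Let $\mathfrak{f}_r$ be the free $2$-step nilpotent Lie algebra of rank $r$, with center $\mathfrak{z}=\Lambda^2(V)$. (i) If $r\equiv0\pmod 4$, then every complex structure on $\mathfrak{f}_r$ is $2$-step. (ii) If $r\equiv3\pmod 4$, then every complex structure $J$ on $\mathfrak{f}_r$ is $3$-step, and moreover $\mathfrak{z}\cap J\mathfrak{z}$ has codimension $1$ in $\mathfrak{z}$.
   Context: For a real vector space $V$ of dimension $r$, the free $2$-step nilpotent Lie algebra of rank $r$ is $\mathfrak{f}_r=V\oplus\Lambda^2(V)$ with Lie bracket $[v,w]=v\wedge w$ for $v,w\in V$ and $\Lambda^2(V)$ central. A complex structure on a real Lie algebra $\mathfrak{g}$ is a linear map $J:\mathfrak{g}\to\mathfrak{g}$ with $J^2=-I$ and $N_J(x,y):=[x,y]+J([Jx,y]+[x,Jy])-[Jx,Jy]=0$ for all $x,y\in\mathfrak{g}$. Given such $J$, define inductively $\mathfrak{a}_0(J)=0$ and $\mathfrak{a}_\ell(J)=\{x\in\mathfrak{g}: [x,\mathfrak{g}]\subset\mathfrak{a}_{\ell-1}(J)\text{ and }[Jx,\mathfrak{g}]\subset\mathfrak{a}_{\ell-1}(J)\}$ for $\ell\ge1$. $J$ is called nilpotent if $\mathfrak{a}_t(J)=\mathfrak{g}$ for some positive integer $t$, and $t$-step if $t$ is the smallest such integer. *)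

From HB Require Import structures.
From mathcomp Require Import all_boot all_order all_algebra.
From mathcomp Require Import reals.
Set Implicit Arguments. Unset Strict Implicit. Unset Printing Implicit Defensive.
Import Order.TTheory GRing.Theory Num.Theory.
Local Open Scope ring_scope.

(* Index set of the standard basis e_i /\ e_j (i < j) of Lambda^2(V), V = R^r. *)
Definition pairs (r : nat) := {p : 'I_r * 'I_r | (p.1 < p.2)%N}.

Definition Lam2 (R : realType) (r : nat) := {ffun pairs r -> R^o}.

(* Underlying vector space of the free 2-step nilpotent Lie algebra f_r = V (+) Lambda^2 V *)
Definition fr (R : realType) (r : nat) := ('rV[R]_r * Lam2 R r)%type.

Definition wedge (R : realType) (r : nat) (v w : 'rV[R]_r) : Lam2 R r :=
  [ffun p : pairs r => v 0 (val p).1 * w 0 (val p).2 - v 0 (val p).2 * w 0 (val p).1].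

Definition fr_bracket (R : realType) (r : nat) (x y : fr R r) : fr R r :=
  (0, wedge x.1 y.1).

Definition complex_structure (R : realType) (r : nat) (J : fr R r -> fr R r) : Prop :=
  [/\ (forall (a : R) (x y : fr R r), J (a *: x + y) = a *: J x + J y),
      (forall x, J (J x) = - x) &
      (forall x y : fr R r,
         fr_bracket x y + J (fr_bracket (J x) y + fr_bracket x (J y))
           - fr_bracket (J x) (J y) = 0)].

Fixpoint asc (R : realType) (r : nat) (J : fr R r -> fr R r) (l : nat) : fr R r -> Prop :=
  match l with
  | 0 => fun x => x = 0
  | l'.+1 => fun x => forall y : fr R r,
                asc J l' (fr_bracket x y) /\ asc J l' (fr_bracket (J x) y)
  end.

Definition is_step (R : realType) (r : nat) (J : fr R r -> fr R r) (t : nat) : Prop :=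
  [/\ (0 < t)%N, (forall x, asc J t x) &
      (forall s, (0 < s)%N -> (forall x, asc J s x) -> (t <= s)%N)].

Definition fr_z (R : realType) (r : nat) : {vspace fr R r} :=
  lker (linfun (fun x : fr R r => x.1)).

Definition J_z (R : realType) (r : nat) (J : fr R r -> fr R r) : {vspace fr R r} :=
  (linfun J @: fr_z R r)%VS.

From HB Require Import structures.
From mathcomp Require Import all_boot all_order all_algebra.
From mathcomp Require Import reals.
From mathcomp Require Import ring lra zify.
Set Implicit Arguments. Unset Strict Implicit. Unset Printing Implicit Defensive.
Import Order.TTheory GRing.Theory Num.Theory.
Local Open Scope ring_scope.

(* Write J in block form with respect to f_r = V (+) z and let B : z -> V be
   its off-diagonal block.  Integrability gives B a /\ B b = 0, so B has rank
   at most one, and B (B a /\ v) = 0.  If B = 0, the V-block A satisfies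
   A^2 = -1, so r is even; if B <> 0, then A^2 = -1 - BC with BC of rank one,
   and the sign of det((A + c BC)^2) for a well chosen c forces r to be odd.
   Only the parity of r matters: for r even z is J-invariant, so J is 2-step;
   for r odd the second identity puts z in a_2(J) while B <> 0 keeps it out of
   a_1(J), so J is 3-step, and z :&: Jz is the kernel of B, of codimension 1. *)

Lemma eq_mx_mul_rV (R : pzRingType) m n (M N : 'M[R]_(m, n)) :
  (forall u : 'rV_m, u *m M = u *m N) -> M = N.
Proof. by move=> MN; apply/row_matrixP => i; rewrite !rowE MN. Qed.

Lemma det1D_rank1 (R : comNzRingType) n (p : 'cV[R]_n) (w : 'rV_n) :
  \det (1%:M + p *m w) = 1 + (w *m p) 0 0.
Proof.
pose K := block_mx (1%:M : 'M[R]_n) p (- w) (1%:M : 'M_1).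
have K_lu : K = block_mx 1%:M 0 (- w) 1%:M *m block_mx 1%:M p 0 (1%:M + w *m p).
  by rewrite mulmx_block !mulmx1 !mul1mx !mulmx0 !mul0mx !addr0 mulNmx addrCA addNr addr0.
have K_ul : K = block_mx (1%:M + p *m w) p 0 1%:M *m block_mx 1%:M 0 (- w) 1%:M.
  by rewrite mulmx_block !mulmx1 !mul1mx ?mulmx0 ?addr0 mulmxN addrK !add0r.
move: (congr1 determinant K_ul); rewrite K_lu !det_mulmx !det_ublock !det_lblock.
by rewrite !det_scalar !expr1n !mul1r !mulr1 det_mx11 !mxE => <-.
Qed.

Section SquareRootsOfMinusOne.
Variables (R : realFieldType) (n : nat).
Implicit Types (A : 'M[R]_n) (p : 'cV[R]_n) (w : 'rV[R]_n).

Lemma sqr_rank1_sign A p w :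
  A *m A = - 1%:M + p *m w -> 0 <= (-1) ^+ n * (1 - (w *m p) 0 0).
Proof.
move=> AA; have : \det (A *m A) = (-1) ^+ n * (1 - (w *m p) 0 0).
  rewrite AA (_ : _ + _ = - (1%:M + (- p) *m w)); last by rewrite opprD mulNmx opprK.
  by rewrite -scaleN1r detZ det1D_rank1 mulmxN mxE.
by move=> <-; rewrite det_mulmx -expr2 sqr_ge0.
Qed.

Lemma sqr_eqN1_even A : A *m A = - 1%:M -> ~~ odd n.
Proof.
move=> AA; have := @sqr_rank1_sign A 0 0; rewrite !mulmx0 addr0 mxE subr0 mulr1.
by rewrite -signr_odd; case: (odd n) => // /(_ AA); rewrite expr1; lra.
Qed.

(* Perturbing [A] to [A + c P] keeps [A^2 = -1 + k P] for a suitable [k]; with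
   the sign of [c] opposite to that of [l], [1 - k tr P < 0] forces [n] odd. *)
Lemma sqr_eqN1_rank1_odd A p w l :
    A *m A = - 1%:M - p *m w ->
    A *m (p *m w) = l *: (p *m w) -> (p *m w) *m A = l *: (p *m w) ->
    (w *m p) 0 0 = - (1 + l ^+ 2) ->
  odd n.
Proof.
set P := p *m w => AA AP PA trP.
have PP : P *m P = - (1 + l ^+ 2) *: P.
  by rewrite /P mulmxA -[p *m w *m p]mulmxA [w *m p]mx11_scalar trP mul_mx_scalar -scalemxAl.
pose c : R := if l <= 0 then 1 else -1.
have cl : c * l <= 0 by rewrite /c; case: ifP => l0; nra.
have c2 : c ^+ 2 = 1 by rewrite /c; case: ifP; rewrite ?sqrrN expr1n.
pose k := -1 + 2 * c * l - c ^+ 2 * (1 + l ^+ 2).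
have XX : (A + c *: P) *m (A + c *: P) = - 1%:M + (k *: p) *m w.
  rewrite mulmxDl !mulmxDr -!scalemxAr -!scalemxAl AA AP PA PP !scalerA -!addrA.
  by congr (_ + _); rewrite -[- P]scaleN1r -!scalerDl /k; congr (_ *: _); ring.
have := sqr_rank1_sign XX; rewrite -scalemxAr mxE trP -signr_odd.
by case: (odd n) => //; rewrite expr0 mul1r /k c2; nra.
Qed.

End SquareRootsOfMinusOne.

Section Wedge.
Variables (R : realType) (r : nat).
Implicit Types (u v w : 'rV[R]_r) (a : Lam2 R r).

Lemma wedge_pairE u v (i j : 'I_r) (ij : (i < j)%N) :
  wedge u v (exist _ (i, j) ij) = u 0 i * v 0 j - u 0 j * v 0 i.
Proof. by rewrite ffunE. Qed.

Lemma wedge0l v : wedge 0 v = 0.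
Proof. by apply/ffunP => p; rewrite !ffunE !mxE !mul0r subrr. Qed.

Lemma wedge0r u : wedge u 0 = 0.
Proof. by apply/ffunP => p; rewrite !ffunE !mxE !mulr0 subrr. Qed.

Lemma wedge_eq0_scale u w k :
  w 0 k != 0 -> wedge u w = 0 -> u = (u 0 k / w 0 k) *: w.
Proof.
move=> wk uw0; apply/rowP => i; rewrite mxE.
case: (ltngtP i k) => [ik|ki|/val_inj ->]; last by rewrite mulfVK.
- move/ffunP/(_ (exist _ (i, k) ik))/eqP: uw0.
  rewrite wedge_pairE ffunE subr_eq0 => /eqP uw.
  by apply: (mulIf wk); rewrite uw; field.
- move/ffunP/(_ (exist _ (k, i) ki))/eqP: uw0.
  rewrite wedge_pairE ffunE subr_eq0 => /eqP uw.
  by apply: (mulIf wk); rewrite -uw; field.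
Qed.

Lemma wedge_eq0_line u w :
  w != 0 -> wedge u w = 0 -> exists t, u = t *: w.
Proof.
case/rV0Pn => k wk uw0; exists (u 0 k / w 0 k); exact: wedge_eq0_scale wk uw0.
Qed.

Lemma wedge_eq0_forall u : (1 < r)%N -> (forall v, wedge u v = 0) -> u = 0.
Proof.
move=> r_gt1 uv0; apply/rowP => i; rewrite mxE.
have [j ij] : exists j : 'I_r, i != j.
  have [i0|i0] := eqVneq i (Ordinal (ltnW r_gt1)); last by exists (Ordinal (ltnW r_gt1)).
  by exists (Ordinal r_gt1); rewrite i0.
move/ffunP: (uv0 (delta_mx 0 j)) => uj0.
case: (ltngtP i j) => [i_lt_j|j_lt_i|/val_inj eij]; last by rewrite eij eqxx in ij.
- move: (uj0 (exist _ (i, j) i_lt_j)).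
  by rewrite wedge_pairE ffunE !mxE /= eqxx (negbTE ij) mulr1 mulr0 subr0.
- move: (uj0 (exist _ (j, i) j_lt_i)).
  rewrite wedge_pairE ffunE !mxE /= eqxx (negbTE ij) mulr1 mulr0 sub0r.
  by move/eqP; rewrite oppr_eq0 => /eqP.
Qed.

Definition lam2_e (p : pairs r) : Lam2 R r :=
  wedge (delta_mx 0 (val p).1) (delta_mx 0 (val p).2).

Lemma lam2_eE p q : lam2_e p q = (q == p)%:R.
Proof.
case: p q => [[i j] /= ij] [[i' j'] /= ij']; rewrite !ffunE !mxE /=.
have -> : (j' == i)%:R * (i' == j)%:R = 0 :> R.
  case: eqP => [ej|_]; case: eqP => [ei|_]; rewrite ?mulr0 ?mul0r //.
  by move: ij'; rewrite ej ei => /(ltn_trans ij); rewrite ltnn.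
by rewrite subr0 -natrM mulnb -xpair_eqE.
Qed.

Lemma lam2_expand a : a = \sum_(p : pairs r) a p *: lam2_e p.
Proof.
apply/ffunP => q; rewrite sum_ffunE (bigD1 q) //= big1 => [|p qp].
  by rewrite ffunE lam2_eE eqxx addr0; exact: (esym (mulr1 _)).
by rewrite ffunE lam2_eE eq_sym (negbTE qp); exact: mulr0.
Qed.

Lemma linear_lam2_eq0 (V : lmodType R) (f : {linear Lam2 R r -> V}) :
  (forall p, f (lam2_e p) = 0) -> forall a, f a = 0.
Proof.
move=> fe0 a; rewrite (lam2_expand a) linear_sum big1 // => p _.
by rewrite linearZZ fe0 scaler0.
Qed.

End Wedge.

Arguments lam2_e {R r} p.

Lemma pairD (U V : nmodType) (u v : U) (a b : V) : (u, a) + (v, b) = (u + v, a + b).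
Proof. by []. Qed.

Section Embeddings.
Variables (R : realType) (r : nat).

Definition inV (v : 'rV[R]_r) : fr R r := (v, 0).
Definition inZ (a : Lam2 R r) : fr R r := (0, a).

Fact inV_is_linear : linear inV.
Proof. by move=> c u v; congr pair; rewrite /= scaler0 addr0. Qed.
Fact inZ_is_linear : linear inZ.
Proof. by move=> c u v; congr pair; rewrite /= scaler0 addr0. Qed.
HB.instance Definition _ := GRing.isLinear.Build _ _ _ _ inV inV_is_linear.
HB.instance Definition _ := GRing.isLinear.Build _ _ _ _ inZ inZ_is_linear.

Lemma fr_pairE v a : (v, a) = inV v + inZ a :> fr R r.
Proof. by congr pair; rewrite ?addr0 ?add0r. Qed.

Lemma mem_fr_z x : (x \in fr_z R r) = (x.1 == 0).
Proof. by rewrite memv_ker lfunE. Qed.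

End Embeddings.

Lemma asc_succ_of_center (R : realType) r (J : fr R r -> fr R r) l :
  (forall a, asc J l (0, a)) -> forall x, asc J l.+1 x.
Proof. by move=> zl x y; split; apply: zl. Qed.

Lemma asc1_not_full (R : realType) r (J : fr R r -> fr R r) :
  (1 < r)%N -> ~ (forall x, asc J 1 x).
Proof.
move=> r_gt1 /(_ (delta_mx 0 (Ordinal (ltnW r_gt1)), 0) (delta_mx 0 (Ordinal r_gt1), 0)).
case=> -[] /ffunP /(_ (exist _ (Ordinal (ltnW r_gt1), Ordinal r_gt1) isT)) + _.
by rewrite wedge_pairE ffunE !mxE /= mulr1 mulr0 subr0 => /eqP; rewrite oner_eq0.
Qed.

Section ComplexStructure.
Variables (R : realType) (r : nat) (J : fr R r -> fr R r).
Hypothesis cJ : complex_structure J.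

Definition JL : {linear fr R r -> fr R r} :=
  HB.pack J (GRing.isLinear.Build _ _ _ _ J (let: And3 J_linear _ _ := cJ in J_linear)).

Lemma J_sqr x : J (J x) = - x.
Proof. by case: cJ. Qed.

Lemma J_opp x : J (- x) = - J x.
Proof. exact: (linearN JL). Qed.

Lemma linfun_JE x : linfun J x = J x.
Proof. exact: (lfunE JL). Qed.

(* The blocks of J for f_r = V (+) z, [Jxy] mapping the x-part to the y-part;
   [Jzv] is the block B of the proof sketch above. *)
Definition Jvv : {linear 'rV[R]_r -> 'rV[R]_r} := fst \o JL \o @inV R r.
Definition Jzv : {linear Lam2 R r -> 'rV[R]_r} := fst \o JL \o @inZ R r.
Definition Jvz : {linear 'rV[R]_r -> Lam2 R r} := snd \o JL \o @inV R r.
Definition Jzz : {linear Lam2 R r -> Lam2 R r} := snd \o JL \o @inZ R r.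
Definition Jvzv : {linear 'rV[R]_r -> 'rV[R]_r} := Jzv \o Jvz.

Lemma JvzvE v : Jvzv v = Jzv (Jvz v).
Proof. by []. Qed.

Lemma J_pairE v a : J (v, a) = (Jvv v + Jzv a, Jvz v + Jzz a).
Proof. by rewrite fr_pairE [J _](linearD JL). Qed.

Lemma Jvv_sqr v : Jvv (Jvv v) + Jzv (Jvz v) = - v.
Proof. by move: (J_sqr (v, 0)); rewrite !J_pairE !linear0 !addr0 => -[]. Qed.

Lemma Jvz_Jvv v : Jvz (Jvv v) = - Jzz (Jvz v).
Proof.
move: (J_sqr (v, 0)); rewrite !J_pairE !linear0 !addr0 => -[_].
by rewrite oppr0 => /eqP; rewrite addr_eq0 => /eqP.
Qed.

Lemma Jvv_Jzv a : Jvv (Jzv a) = - Jzv (Jzz a).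
Proof.
move: (J_sqr (0, a)); rewrite !J_pairE !linear0 !add0r => -[].
by rewrite oppr0 => /eqP; rewrite addr_eq0 => /eqP.
Qed.

Lemma Jvz_Jzv a : Jvz (Jzv a) = - a - Jzz (Jzz a).
Proof.
by move: (J_sqr (0, a)); rewrite !J_pairE !linear0 !add0r => -[_ <-]; rewrite addrK.
Qed.

Lemma J_integrable_blocks x y :
  let e := wedge (J x).1 y.1 + wedge x.1 (J y).1 in
  Jzv e = 0 /\ wedge x.1 y.1 + Jzz e - wedge (J x).1 (J y).1 = 0.
Proof.
have [_ _ /(_ x y)] := cJ.
rewrite /fr_bracket [X in J X]pairD addr0 J_pairE !linear0.
by rewrite !add0r pairD /= add0r subr0 => -[].
Qed.

Lemma wedge_Jzv a b : wedge (Jzv a) (Jzv b) = 0.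
Proof.
have [_] := J_integrable_blocks (0, a) (0, b).
rewrite !J_pairE !linear0; cbn [fst snd].
rewrite !add0r !wedge0l !wedge0r !add0r linear0 sub0r.
by move/eqP; rewrite oppr_eq0 => /eqP.
Qed.

Lemma Jzv_wedge_Jzv a v : Jzv (wedge (Jzv a) v) = 0.
Proof.
have [] := J_integrable_blocks (0, a) (v, 0).
by rewrite !J_pairE !linear0; cbn [fst snd]; rewrite !add0r wedge0l addr0.
Qed.

Lemma Jzv_eq0_even : (forall a, Jzv a = 0) -> ~~ odd r.
Proof.
move=> Jzv0; apply: (@sqr_eqN1_even _ _ (lin1_mx Jvv)).
apply: eq_mx_mul_rV => u; rewrite mulmxA !mul_rV_lin1 mulmxN mulmx1.
by rewrite -(Jvv_sqr u) Jzv0 addr0.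
Qed.

Section JzvNonzero.
Variable a0 : Lam2 R r.
Hypothesis Jzv_a0 : Jzv a0 != 0.

Lemma Jzv_line a : exists t, Jzv a = t *: Jzv a0.
Proof. exact: wedge_eq0_line Jzv_a0 (wedge_Jzv a a0). Qed.

Lemma Jvv_Jzv_eigen : exists l, forall a, Jvv (Jzv a) = l *: Jzv a.
Proof.
have [l Jvv_a0] := Jzv_line (- Jzz a0).
exists l => a; have [t ->] := Jzv_line a.
by rewrite linearZZ Jvv_Jzv -linearN Jvv_a0 scalerA mulrC -scalerA.
Qed.

Lemma Jzv_odd : odd r.
Proof.
have [l Jvv_Jzv_l] := Jvv_Jzv_eigen.
have Jzv_Jzz (a : Lam2 R r) : Jzv (Jzz a) = - l *: Jzv a.
  by rewrite scaleNr -Jvv_Jzv_l Jvv_Jzv opprK.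
have [k wk] := rV0Pn _ Jzv_a0.
pose p := \col_i (Jzv (Jvz (delta_mx 0 i)) 0 k / Jzv a0 0 k).
have P_rank1 : lin1_mx Jvzv = p *m Jzv a0. (* its rows lie on the image line of B *)
  apply/matrixP => i j; rewrite !mxE big_ord1 !mxE JvzvE.
  by rewrite {1}(wedge_eq0_scale wk (wedge_Jzv _ a0)) mxE.
apply: (@sqr_eqN1_rank1_odd _ _ (lin1_mx Jvv) p (Jzv a0) l); rewrite -?P_rank1.
- apply: eq_mx_mul_rV => u.
  rewrite mulmxA !mul_rV_lin1 mulmxBr mulmxN mulmx1 mul_rV_lin1 JvzvE.
  by rewrite -Jvv_sqr addrK.
- apply: eq_mx_mul_rV => u; rewrite -scalemxAr mulmxA !mul_rV_lin1 !JvzvE.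
  by rewrite Jvz_Jvv linearN Jzv_Jzz scaleNr opprK.
- apply: eq_mx_mul_rV => u.
  by rewrite -scalemxAr mulmxA !mul_rV_lin1 JvzvE Jvv_Jzv_l.
have Pw : Jzv (Jvz (Jzv a0)) = - (1 + l ^+ 2) *: Jzv a0.
  rewrite Jvz_Jzv linearB linearN (Jzv_Jzz (Jzz a0)) (Jzv_Jzz a0) scalerA.
  by rewrite -(scaleN1r (Jzv a0)) -scalerBl; congr (_ *: _); ring.
have wP := mul_rV_lin1 Jvzv (Jzv a0).
rewrite P_rank1 mulmxA [Jzv a0 *m p]mx11_scalar mul_scalar_mx JvzvE Pw in wP.
move/eqP: wP; rewrite -subr_eq0 -scalerBl scaler_eq0 (negbTE Jzv_a0) orbF subr_eq0.
by move/eqP.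
Qed.

Lemma dim_z_cap_Jz : (\dim (fr_z R r :&: J_z J) + 1 = \dim (fr_z R r))%N.
Proof.
pose g : {linear fr R r -> 'rV[R]_r} := fst \o JL.
have Jz_ker : J_z J = lker (linfun g).
  apply/vspaceP => x; rewrite memv_ker lfunE /=.
  apply/memv_imgP/eqP => [[[u a] + ->]|gx0].
    by rewrite linfun_JE J_sqr mem_fr_z /= => /eqP ->; exact: oppr0.
  exists (- J x); first by rewrite mem_fr_z -[(- _).1]/(- (J x).1) gx0 oppr0.
  by rewrite linfun_JE J_opp J_sqr opprK.
have gz : (linfun g @: fr_z R r)%VS = <[Jzv a0]>%VS.
  apply/vspaceP => x; apply/memv_imgP/vlineP => [[[u a] + ->]|[t ->]].
    by rewrite mem_fr_z lfunE /= => /eqP ->; exact: Jzv_line.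
  exists (0, t *: a0); rewrite ?mem_fr_z // lfunE /=.
  by rewrite -[(J (0, t *: a0)).1]/(Jzv (t *: a0)) linearZZ.
by rewrite Jz_ker -(limg_ker_dim (linfun g) (fr_z R r)) gz dim_vline Jzv_a0.
Qed.

End JzvNonzero.

Lemma Jzv_eq0_of_even : ~~ odd r -> forall a, Jzv a = 0.
Proof. by move=> even_r a; apply/eqP; apply: contraNT even_r => /Jzv_odd. Qed.

Lemma Jzv_neq0_of_odd : odd r -> exists a0, Jzv a0 != 0.
Proof.
move=> odd_r; case: (pickP (fun p : pairs r => Jzv (lam2_e p) != 0)) => [p|Jzv0].
  by exists (lam2_e p).
suff /Jzv_eq0_even : forall a, Jzv a = 0 by rewrite odd_r.
by apply: linear_lam2_eq0 => p; apply/eqP/negbFE/Jzv0.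
Qed.

Lemma asc1_z a : Jzv a = 0 -> asc J 1 (0, a).
Proof.
move=> Jzv_a y; rewrite /fr_bracket /= wedge0l; split=> //.
by rewrite -[(J _).1]/(Jzv a) Jzv_a wedge0l.
Qed.

Lemma asc2_z a : asc J 2 (0, a).
Proof.
move=> y; split; apply: asc1_z; first by rewrite wedge0l linear0.
exact: Jzv_wedge_Jzv.
Qed.

Lemma asc2_full_Jzv_eq0 :
  (1 < r)%N -> (forall x, asc J 2 x) -> forall a, Jzv a = 0.
Proof.
move=> r_gt1 full; apply: linear_lam2_eq0 => p.
apply: (wedge_eq0_forall (u := Jzv _) r_gt1) => v.
have [+ _] := full (delta_mx 0 (val p).1, 0) (delta_mx 0 (val p).2, 0).
by move=> /(_ (v, 0)) [_ []].
Qed.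

Lemma complex_structure_even_2step : (0 < r)%N -> ~~ odd r -> is_step J 2.
Proof.
move=> r_gt0 even_r; have r_gt1 : (1 < r)%N by case: r r_gt0 even_r => [|[]].
split=> // [|[|[|s]]] //.
- by apply: asc_succ_of_center => a; apply/asc1_z/Jzv_eq0_of_even.
- by move=> _ /(asc1_not_full r_gt1).
Qed.

Lemma complex_structure_odd_3step :
  (1 < r)%N -> odd r ->
  is_step J 3 /\ (\dim (fr_z R r :&: J_z J) + 1 = \dim (fr_z R r))%N.
Proof.
move=> r_gt1 odd_r; have [a0 Jzv_a0] := Jzv_neq0_of_odd odd_r.
split; last exact: dim_z_cap_Jz Jzv_a0.
split=> // [|[|[|[|s]]]] //.
- exact: asc_succ_of_center asc2_z.
- by move=> _ /(asc1_not_full r_gt1).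
- by move=> _ /(asc2_full_Jzv_eq0 r_gt1)/(_ a0)/eqP; rewrite (negbTE Jzv_a0).
Qed.

End ComplexStructure.

Theorem mainTheorem9 (R : realType) (r : nat) :
  ((0 < r)%N -> (r %% 4 = 0)%N ->
     forall J : fr R r -> fr R r, complex_structure J -> is_step J 2)
  /\
  ((r %% 4 = 3)%N ->
     forall J : fr R r -> fr R r, complex_structure J ->
       is_step J 3 /\
       (\dim (fr_z R r :&: J_z J) + 1 = \dim (fr_z R r))%N).
Proof.
split=> [r_gt0 r_mod4 J cJ | r_mod4 J cJ].
- apply: complex_structure_even_2step => //.
  by rewrite (divn_eq r 4) r_mod4 addn0 oddM andbF.
- apply: complex_structure_odd_3step => //; first lia.
  by rewrite (divn_eq r 4) r_mod4 oddD oddM andbF.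
Qed.
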